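(* Let $R$ and $S$ be semisimple rings, $(A,C)$ an almost-Koszul pair over $R$ with isomorphism $\theta'\colon C_1\to A^1$, and $(B,D)$ an almost-Koszul pair over $S$ with isomorphism $\theta''\colon D_1\to B^1$. Then $(A\times B,C\oplus D)$ is an almost-Koszul pair over $R\times S$ with respect to the isomorphism $\theta\colon C_1\oplus D_1\to A^1\times B^1$, $\theta(c,d)=(\theta'(c),\theta''(d))$. Moreover, this pair is Koszul if and only if both $(A,C)$ and $(B,D)$ are Koszul.
   Context: For a semisimple ring $K$ and $\otimes=\otimes_K$: a connected graded $K$-ring is an $\mathbb N$-graded algebra $A=\bigoplus A^n$ in $K$-bimodules with $A^0=K$ and multiplication components $\mu^{p,q}$; a connected graded $K$-coring is an $\mathbb N$-graded coalgebra $C=\bigoplus C_n$ in $K$-bimodules with $C_0=K$ and components $\Delta_{p,q}(c)=\sum c_{1,p}\otimes c_{2,q}$. An almost-Koszul pair consists of such $A$, $C$ and a bimodule isomorphism $\theta\colon C_1\to A^1$ with $\mu^{1,1}\circ(\theta\otimes\theta)\circ\Delta_{1,1}=0$ on $C_2$; it is Koszul if the complex $\mathrm K^l_{-1}=K$, $\mathrm K^l_n=A\otimes C_n$ ($n\ge0$), $d_0$ the augmentation $A\otimes C_0\cong A\to K$, $d_n(a\otimes c)=\sum a\theta(c_{1,1})\otimes c_{2,n-1}$, is exact. For an $R$-bimodule $V$ and an $S$-bimodule $W$, $V\oplus W$ is an $R\times S$-bimodule via $(r,s)(v,w)=(rv,sw)$, $(v,w)(r',s')=(vr',ws')$. $A\times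 B$ is the graded $R\times S$-ring with componentwise operations, $(A\times B)^n=A^n\times B^n$; $C\oplus D$ is the graded $R\times S$-coring with $(C\oplus D)_n=C_n\oplus D_n$ and $\Delta_{p,q}(c,d)=\sum(c_{1,p},0)\otimes_{R\times S}(c_{2,q},0)+\sum(0,d_{1,p})\otimes_{R\times S}(0,d_{2,q})$. *)

From mathcomp Require Import all_boot all_algebra.
Set Implicit Arguments.
Unset Strict Implicit.
Unset Printing Implicit Defensive.
Import GRing.Theory.
Local Open Scope ring_scope.

Definition left_ideal (K : pzRingType) (I : K -> Prop) : Prop :=
  [/\ I 0, (forall x y, I x -> I y -> I (x + y)) & (forall k x, I x -> I (k * x))].

Definition semisimple (K : pzRingType) : Prop :=
  forall I : K -> Prop, left_ideal I ->
    exists J : K -> Prop, [/\ left_ideal J,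
      (forall x, I x -> J x -> x = 0) &
      (forall x, exists a b, [/\ I a, J b & x = a + b])].

Record bimod (K : Type) := BiMod {
  bcar : zmodType;
  blact : K -> bcar -> bcar;
  bract : bcar -> K -> bcar }.
Arguments BiMod {K}.
Arguments bcar {K} b.
Arguments blact {K b} _ _.
Arguments bract {K b} _ _.

Definition is_bimod (K : pzRingType) (M : bimod K) : Prop :=
  let la := @blact K M in let ra := @bract K M in
  [/\ (forall k x y, la k (x + y) = la k x + la k y),
      (forall k k' x, la (k + k') x = la k x + la k' x),
      (forall k k' x, la (k * k') x = la k (la k' x)) &
      (forall x, la 1 x = x)] /\
  [/\ (forall k x y, ra (x + y) k = ra x k + ra y k),
      (forall k k' x, ra x (k + k') = ra x k + ra x k'),
      (forall k k' x, ra x (k * k') = ra (ra x k) k'),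
      (forall x, ra x 1 = x) &
      (forall k k' x, ra (la k x) k' = la k (ra x k'))].

(* Tensor products over K, presented by formal sums of pure tensors.  *)
(* A formal sum s : seq (M * N) stands for \sum_(x <- s) x.1 (x) x.2  *)
(* (negatives are (-m) (x) n).  Two formal sums define the same       *)
(* element of M (x)_K N iff every K-balanced biadditive map into an   *)
(* abelian group agrees on them (universal property of (x)_K).        *)
Definition balanced (K : Type) (M N G : zmodType)
  (ra : M -> K -> M) (la : K -> N -> N) (f : M -> N -> G) : Prop :=
  [/\ (forall m m' n, f (m + m') n = f m n + f m' n),
      (forall m n n', f m (n + n') = f m n + f m n') &
      (forall m k n, f (ra m k) n = f m (la k n))].

Definition tsum (M N : Type) (G : zmodType) (f : M -> N -> G) (s : seq (M * N)) : G :=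
  \sum_(x <- s) f x.1 x.2.

Definition teq (K : Type) (M N : zmodType) (ra : M -> K -> M) (la : K -> N -> N)
  (s t : seq (M * N)) : Prop :=
  forall (G : zmodType) (f : M -> N -> G), balanced ra la f -> tsum f s = tsum f t.

Definition tensor_eq (K : Type) (M N : bimod K) (s t : seq (bcar M * bcar N)) : Prop :=
  @teq K (bcar M) (bcar N) (@bract K M) (@blact K N) s t.

Definition balanced3 (K : Type) (M N P G : zmodType)
  (raM : M -> K -> M) (laN : K -> N -> N) (raN : N -> K -> N) (laP : K -> P -> P)
  (f : M -> N -> P -> G) : Prop :=
  [/\ (forall m m' n p, f (m + m') n p = f m n p + f m' n p),
      (forall m n n' p, f m (n + n') p = f m n p + f m n' p),
      (forall m n p p', f m n (p + p') = f m n p + f m n p'),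
      (forall m k n p, f (raM m k) n p = f m (laN k n) p) &
      (forall m n k p, f m (raN n k) p = f m n (laP k p))].

Definition tensor3_eq (K : Type) (M N P : bimod K)
  (s t : seq (bcar M * bcar N * bcar P)) : Prop :=
  forall (G : zmodType) (f : bcar M -> bcar N -> bcar P -> G),
    balanced3 (@bract K M) (@blact K N) (@bract K N) (@blact K P) f ->
    \sum_(x <- s) f x.1.1 x.1.2 x.2 = \sum_(x <- t) f x.1.1 x.1.2 x.2.

(* Connected graded K-rings.  A K-ring (monoid in K-bimodules) is a   *)
(* ring A with a ring morphism eta : K -> A; the grading is given by  *)
(* the homogeneous components ghom n = A^n; gaug is the augmentation  *)
(* A -> A^0 = K (determined by the other data via the axioms).        *)
Record gring (K : Type) := GRing_ {
  gcar : pzRingType;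
  geta : K -> gcar;
  ghom : nat -> gcar -> Prop;
  gaug : gcar -> K }.
Arguments GRing_ {K}.
Arguments gcar {K} g.
Arguments geta {K} g _.
Arguments ghom {K} g _ _.
Arguments gaug {K} g _.

Definition is_conn_graded_ring (K : pzRingType) (A : gring K) : Prop :=
  [/\
      (forall k k', geta A (k + k') = geta A k + geta A k'),
      (forall k k', geta A (k * k') = geta A k * geta A k') &
      geta A 1 = 1] /\
  [/\
      (forall n, ghom A n 0) &
      (forall n a b, ghom A n a -> ghom A n b -> ghom A n (a - b))] /\
  [/\
      (forall a, exists (N : nat) (f : nat -> gcar A),
          (forall i, ghom A i (f i)) /\ a = \sum_(i < N) f i),
      (forall (N : nat) (f : nat -> gcar A), (forall i, ghom A i (f i)) ->
          \sum_(i < N) f i = 0 -> forall i, (i < N)%N -> f i = 0) &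
      (forall p q a b, ghom A p a -> ghom A q b -> ghom A (p + q)%N (a * b))] /\
  [/\
      (forall a, ghom A 0 a <-> (exists k, a = geta A k)),
      injective (geta A) &
      [/\ (forall a b, gaug A (a + b) = gaug A a + gaug A b),
          (forall k, gaug A (geta A k) = k) &
          (forall n a, (0 < n)%N -> ghom A n a -> gaug A a = 0)]].

Definition gring_bimod (K : Type) (A : gring K) : bimod K :=
  BiMod (gcar A : zmodType) (fun k a => geta A k * a) (fun a k => a * geta A k).

(* Connected graded K-corings, given by their components C_n and the  *)
(* components Delta_{p,q} : C_n -> C_p (x)_K C_q (for p + q = n) of    *)
(* the comultiplication, together with the counit on C_0 = K.          *)
Record gcoring (K : Type) := GCoring {
  ccomp : nat -> bimod K;
  cdelta : forall n p q : nat, (p + q)%N = n ->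
             bcar (ccomp n) -> seq (bcar (ccomp p) * bcar (ccomp q));
  ceps0 : bcar (ccomp 0) -> K }.
Arguments GCoring {K}.
Arguments ccomp {K} g _.
Arguments cdelta {K} g {n p q} _ _.
Arguments ceps0 {K} g _.

Definition is_conn_graded_coring (K : pzRingType) (C : gcoring K) : Prop :=
  (forall n, is_bimod (ccomp C n)) /\
  [/\
      (forall n p q (H : (p + q)%N = n) c c',
         tensor_eq (cdelta C H (c + c')) (cdelta C H c ++ cdelta C H c')),
      (forall n p q (H : (p + q)%N = n) k c,
         tensor_eq (cdelta C H (blact k c))
                   [seq (blact k x.1, x.2) | x <- cdelta C H c]),
      (forall n p q (H : (p + q)%N = n) k c,
         tensor_eq (cdelta C H (bract c k))
                   [seq (x.1, bract x.2 k) | x <- cdelta C H c]) &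
      (forall p q r n (H : (p + q + r)%N = n) c,
         tensor3_eq
           (flatten [seq [seq (y.1, y.2, x.2) | y <- cdelta C (erefl (p + q)%N) x.1]
                    | x <- cdelta C H c])
           (flatten [seq [seq (x.1, y.1, y.2) | y <- cdelta C (erefl (q + r)%N) x.2]
                    | x <- cdelta C (etrans (addnA p q r) H) c]))] /\
  [/\
      [/\ (forall c c', ceps0 C (c + c') = ceps0 C c + ceps0 C c'),
          (forall k c, ceps0 C (blact k c) = k * ceps0 C c),
          (forall k c, ceps0 C (bract c k) = ceps0 C c * k) &
          bijective (ceps0 C)],
      (forall n (c : bcar (ccomp C n)),
         \sum_(x <- cdelta C (erefl (0 + n)%N) c) blact (ceps0 C x.1) x.2 = c) &
      (forall n (c : bcar (ccomp C n)),
         \sum_(x <- cdelta C (addn0 n) c) bract x.1 (ceps0 C x.2) = c)].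

Definition is_theta (K : pzRingType) (A : gring K) (C : gcoring K)
  (theta : bcar (ccomp C 1) -> gcar A) : Prop :=
  [/\ (forall c c', theta (c + c') = theta c + theta c'),
      (forall k c, theta (blact k c) = geta A k * theta c) &
      (forall k c, theta (bract c k) = theta c * geta A k)] /\
  [/\ injective theta,
      (forall c, ghom A 1 (theta c)) &
      (forall a, ghom A 1 a -> exists c, theta c = a)].

Definition almost_koszul (K : pzRingType) (A : gring K) (C : gcoring K)
  (theta : bcar (ccomp C 1) -> gcar A) : Prop :=
  [/\ is_conn_graded_ring A, is_conn_graded_coring C, is_theta theta &
      (forall c : bcar (ccomp C 2),
         \sum_(x <- cdelta C (erefl (1 + 1)%N) c) theta x.1 * theta x.2 = 0)].

Arguments almost_koszul {K} A C theta.

(* The Koszul complex K^l: K_{-1} = K, K_n = A (x)_K C_n. *)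
Definition kdiff0 (K : pzRingType) (A : gring K) (C : gcoring K)
  (s : seq (gcar A * bcar (ccomp C 0))) : K :=
  \sum_(x <- s) gaug A (x.1 * geta A (ceps0 C x.2)).

Definition kdiff (K : Type) (A : gring K) (C : gcoring K)
  (theta : bcar (ccomp C 1) -> gcar A) (n : nat)
  (s : seq (gcar A * bcar (ccomp C n.+1))) : seq (gcar A * bcar (ccomp C n)) :=
  flatten [seq [seq (x.1 * theta y.1, y.2) | y <- cdelta C (erefl (1 + n)%N) x.2]
          | x <- s].

Definition koszul (K : pzRingType) (A : gring K) (C : gcoring K)
  (theta : bcar (ccomp C 1) -> gcar A) : Prop :=
  almost_koszul A C theta /\
  [/\
      (forall k : K, exists s : seq (gcar A * bcar (ccomp C 0)), kdiff0 s = k),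
      (forall s : seq (gcar A * bcar (ccomp C 0)), kdiff0 s = 0 ->
         exists t, tensor_eq (M := gring_bimod A) (kdiff theta t) s) &
      (forall n (s : seq (gcar A * bcar (ccomp C n.+1))),
         tensor_eq (M := gring_bimod A) (kdiff theta s) [::] ->
         exists t, tensor_eq (M := gring_bimod A) (kdiff theta t) s)].

Arguments koszul {K} A C theta.

Definition bimod_sum (R S : Type) (V : bimod R) (W : bimod S) : bimod (R * S) :=
  BiMod ((bcar V * bcar W)%type : zmodType)
    (fun k x => (blact k.1 x.1, blact k.2 x.2))
    (fun x k => (bract x.1 k.1, bract x.2 k.2)).

Definition gring_prod (R S : Type) (A : gring R) (B : gring S) : gring (R * S) :=
  GRing_ ((gcar A * gcar B)%type : pzRingType)
    (fun k => (geta A k.1, geta B k.2))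
    (fun n x => ghom A n x.1 /\ ghom B n x.2)
    (fun x => (gaug A x.1, gaug B x.2)).

Definition gcoring_sum (R S : Type) (C : gcoring R) (D : gcoring S) : gcoring (R * S) :=
  GCoring (fun n => bimod_sum (ccomp C n) (ccomp D n))
    (fun n p q H x =>
       [seq ((y.1, 0), (y.2, 0)) | y <- cdelta C H x.1] ++
       [seq ((0, y.1), (0, y.2)) | y <- cdelta D H x.2])
    (fun x => (ceps0 C x.1, ceps0 D x.2)).

Definition theta_prod (R S : Type) (A : gring R) (B : gring S)
  (C : gcoring R) (D : gcoring S)
  (t1 : bcar (ccomp C 1) -> gcar A) (t2 : bcar (ccomp D 1) -> gcar B)
  : bcar (ccomp (gcoring_sum C D) 1) -> gcar (gring_prod A B) :=
  fun x => (t1 x.1, t2 x.2).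

From mathcomp Require Import all_boot all_algebra.
Set Implicit Arguments.
Unset Strict Implicit.
Unset Printing Implicit Defensive.
Import GRing.Theory.
Local Open Scope ring_scope.

(* The ring R * S splits along its orthogonal central idempotents (1, 0) and
   (0, 1).  Moving them across the tensor sign kills the cross terms of every
   balanced map on (M1 + M2) (x)_{R * S} (N1 + N2), which is therefore the sum of
   its restrictions to M1 (x)_R N1 and M2 (x)_S N2.  Consequently the
   comultiplication of C + D, the relation mu (theta (x) theta) Delta = 0 and the
   Koszul complex of (A * B, C + D) are the direct sums of those of (A, C) and
   (B, D), and a direct sum of complexes is exact iff both summands are. *)

Lemma additive_map0 (M N : zmodType) (f : M -> N) :
  (forall x y, f (x + y) = f x + f y) -> f 0 = 0.
Proof. by move=> fD; apply: (addrI (f 0)); rewrite -fD !addr0. Qed.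

Lemma big_pair (I : Type) (M N : zmodType) (r : seq I) (F : I -> M * N) :
  \sum_(i <- r) F i = (\sum_(i <- r) (F i).1, \sum_(i <- r) (F i).2).
Proof. by elim: r => [|i r IH]; rewrite ?big_nil ?big_cons // IH. Qed.

Lemma big_flatten_map (I J T : Type) (M : zmodType) (r : seq I) (s : I -> seq J)
    (F : I -> J -> T) (G : T -> M) :
  \sum_(x <- flatten [seq [seq F i j | j <- s i] | i <- r]) G x
  = \sum_(i <- r) \sum_(j <- s i) G (F i j).
Proof. by rewrite big_flatten big_map; apply: eq_bigr => i _; rewrite big_map. Qed.

Section Bimodule.
Variables (K : pzRingType) (M : bimod K).
Hypothesis HM : is_bimod M.

Lemma blactr0 k : blact k (0 : bcar M) = 0.
Proof. by case: HM => [[laD _ _ _] _]; exact: additive_map0. Qed.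

Lemma blact0r (x : bcar M) : blact 0 x = 0.
Proof.
by case: HM => [[_ laDk _ _] _]; apply: (additive_map0 (f := fun k => blact k x)).
Qed.

Lemma bract0r k : bract (0 : bcar M) k = 0.
Proof. by case: HM => [_ [raD _ _ _ _]]; apply: (additive_map0 (f := bract^~ k)). Qed.

Lemma bractr1 (x : bcar M) : bract x 1 = x.
Proof. by case: HM => [_ [_ _ _ ra1 _]]. Qed.

End Bimodule.

Lemma add_pairE (U V : zmodType) (a c : U) (b d : V) :
  (a, b) + (c, d) = (a + c, b + d) :> U * V.
Proof. by []. Qed.

Lemma mul_pairE (U V : pzRingType) (a c : U) (b d : V) :
  (a, b) * (c, d) = (a * c, b * d) :> U * V.
Proof. by []. Qed.

Lemma bimod_sumP (R S : pzRingType) (M : bimod R) (N : bimod S) :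
  is_bimod M -> is_bimod N -> is_bimod (bimod_sum M N).
Proof.
move=> [[a1 a2 a3 a4] [b1 b2 b3 b4 b5]] [[c1 c2 c3 c4] [d1 d2 d3 d4 d5]].
by split; split=> /= *; apply: injective_projections;
  rewrite /= ?(a1, a2, a3, a4, b1, b2, b3, b4, b5, c1, c2, c3, c4, d1, d2, d3, d4, d5).
Qed.

Lemma balanced0l (K : Type) (M N G : zmodType) (ra : M -> K -> M) (la : K -> N -> N)
    (f : M -> N -> G) :
  balanced ra la f -> forall n, f 0 n = 0.
Proof. by case=> fDl _ _ n; apply: (additive_map0 (f := f^~ n)). Qed.

Lemma balanced0r (K : Type) (M N G : zmodType) (ra : M -> K -> M) (la : K -> N -> N)
    (f : M -> N -> G) :
  balanced ra la f -> forall m, f m 0 = 0.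
Proof. by case=> _ fDr _ m; apply: additive_map0. Qed.

Section BalancedSum.
Variables (R S : pzRingType) (M1 N1 : bimod R) (M2 N2 : bimod S).
Local Notation M := (bimod_sum M1 M2).
Local Notation N := (bimod_sum N1 N2).
Local Notation balancedRS := (balanced (@bract _ M) (@blact _ N)).

Lemma balanced_fst (G : zmodType) (g : bcar M1 -> bcar N1 -> G) :
  balanced (@bract R M1) (@blact R N1) g -> balancedRS (fun x y => g x.1 y.1).
Proof. by case=> gDl gDr gA; split=> /= *; rewrite ?(gDl, gDr, gA). Qed.

Lemma balanced_snd (G : zmodType) (g : bcar M2 -> bcar N2 -> G) :
  balanced (@bract S M2) (@blact S N2) g -> balancedRS (fun x y => g x.2 y.2).
Proof. by case=> gDl gDr gA; split=> /= *; rewrite ?(gDl, gDr, gA). Qed.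

Hypotheses (HM1 : is_bimod M1) (HN1 : is_bimod N1) (HM2 : is_bimod M2) (HN2 : is_bimod N2).
Variables (G : zmodType) (f : bcar M -> bcar N -> G).
Hypothesis Hf : balancedRS f.

Lemma balanced_suml : balanced (@bract R M1) (@blact R N1) (fun m n => f (m, 0) (n, 0)).
Proof.
case: Hf => fDl fDr fA; split=> [m m' n|m n n'|m k n].
- by rewrite -fDl add_pairE addr0.
- by rewrite -fDr add_pairE addr0.
- by have := fA (m, 0) (k, 0) (n, 0); rewrite /= bract0r // blactr0.
Qed.

Lemma balanced_sumr : balanced (@bract S M2) (@blact S N2) (fun m n => f (0, m) (0, n)).
Proof.
case: Hf => fDl fDr fA; split=> [m m' n|m n n'|m k n].
- by rewrite -fDl add_pairE addr0.
- by rewrite -fDr add_pairE addr0.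
- by have := fA (0, m) (0, k) (0, n); rewrite /= bract0r // blactr0.
Qed.

Lemma balanced_sum_split x y : f x y = f (x.1, 0) (y.1, 0) + f (0, x.2) (0, y.2).
Proof.
case: Hf => fDl fDr fA.
have cross12 m n : f (m, 0) (0, n) = 0.
  have := fA (m, 0) (1, 0) (0, n); rewrite /= bractr1 // bract0r // blactr0 // blact0r // => ->.
  exact: (balanced0r Hf).
have cross21 m n : f (0, m) (n, 0) = 0.
  have := fA (0, m) (0, 1) (n, 0); rewrite /= bractr1 // bract0r // blactr0 // blact0r // => ->.
  exact: (balanced0r Hf).
case: x y => [m1 m2] [n1 n2] /=.
have -> : (m1, m2) = (m1, 0) + (0, m2) :> bcar M by rewrite add_pairE addr0 add0r.
have -> : (n1, n2) = (n1, 0) + (0, n2) :> bcar N by rewrite add_pairE addr0 add0r.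
by rewrite !fDl !fDr cross12 cross21 addr0 add0r.
Qed.

End BalancedSum.

Section Balanced3.
Variables (K : Type) (M N P G : zmodType) (raM : M -> K -> M) (laN : K -> N -> N).
Variables (raN : N -> K -> N) (laP : K -> P -> P) (f : M -> N -> P -> G).
Hypothesis Hf : balanced3 raM laN raN laP f.

Lemma balanced3_fix3 p : balanced raM laN (fun m n => f m n p).
Proof. by case: Hf => fD1 fD2 _ fA _; split=> *; rewrite ?(fD1, fD2, fA). Qed.

Lemma balanced3_fix1 m : balanced raN laP (fun n p => f m n p).
Proof. by case: Hf => _ fD2 fD3 _ fA; split=> *; rewrite ?(fD2, fD3, fA). Qed.

End Balanced3.

Section Balanced3Sum.
Variables (R S : pzRingType) (M1 N1 P1 : bimod R) (M2 N2 P2 : bimod S).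
Hypotheses (HM1 : is_bimod M1) (HN1 : is_bimod N1) (HP1 : is_bimod P1).
Hypotheses (HM2 : is_bimod M2) (HN2 : is_bimod N2) (HP2 : is_bimod P2).
Local Notation M := (bimod_sum M1 M2).
Local Notation N := (bimod_sum N1 N2).
Local Notation P := (bimod_sum P1 P2).
Variables (G : zmodType) (f : bcar M -> bcar N -> bcar P -> G).
Hypothesis Hf : balanced3 (@bract _ M) (@blact _ N) (@bract _ N) (@blact _ P) f.

Lemma balanced3_suml : balanced3 (@bract R M1) (@blact R N1) (@bract R N1) (@blact R P1)
  (fun m n p => f (m, 0) (n, 0) (p, 0)).
Proof.
case: Hf => fD1 fD2 fD3 fA1 fA2; split=> [m m' n p|m n n' p|m n p p'|m k n p|m n k p].
- by rewrite -fD1 add_pairE addr0.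
- by rewrite -fD2 add_pairE addr0.
- by rewrite -fD3 add_pairE addr0.
- by have := fA1 (m, 0) (k, 0) (n, 0) (p, 0); rewrite /= bract0r // blactr0.
- by have := fA2 (m, 0) (n, 0) (k, 0) (p, 0); rewrite /= bract0r // blactr0.
Qed.

Lemma balanced3_sumr : balanced3 (@bract S M2) (@blact S N2) (@bract S N2) (@blact S P2)
  (fun m n p => f (0, m) (0, n) (0, p)).
Proof.
case: Hf => fD1 fD2 fD3 fA1 fA2; split=> [m m' n p|m n n' p|m n p p'|m k n p|m n k p].
- by rewrite -fD1 add_pairE addr0.
- by rewrite -fD2 add_pairE addr0.
- by rewrite -fD3 add_pairE addr0.
- by have := fA1 (0, m) (0, k) (0, n) (0, p); rewrite /= bract0r // blactr0.
- by have := fA2 (0, m) (0, n) (0, k) (0, p); rewrite /= bract0r // blactr0.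
Qed.

End Balanced3Sum.

Lemma gaug0 (K : pzRingType) (A : gring K) : is_conn_graded_ring A -> gaug A 0 = 0.
Proof. by case=> _ [_ [_ [_ _ [augD _ _]]]]; exact: additive_map0. Qed.

Lemma gring_bimodP (K : pzRingType) (A : gring K) :
  is_conn_graded_ring A -> is_bimod (gring_bimod A).
Proof.
move=> [[etaD etaM eta1] _].
by split; split=> /= *; rewrite ?(mulrDl, mulrDr, etaD, etaM, eta1, mul1r, mulr1, mulrA).
Qed.

Lemma sum_ord_widen (M : zmodType) (m n : nat) (F : nat -> M) : (m <= n)%N ->
  \sum_(i < m) F i = \sum_(i < n) (if (i < m)%N then F i else 0).
Proof. by move=> le_mn; rewrite (big_ord_widen _ _ le_mn) big_mkcond. Qed.

Lemma gring_prodP (R S : pzRingType) (A : gring R) (B : gring S) :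
  is_conn_graded_ring A -> is_conn_graded_ring B -> is_conn_graded_ring (gring_prod A B).
Proof.
move=> [[etaD1 etaM1 eta11] [[hom01 homB1] [[dec1 uniq1 homM1] [hom0E1 etaI1 [augD1 augK1 aug01]]]]].
move=> [[etaD2 etaM2 eta12] [[hom02 homB2] [[dec2 uniq2 homM2] [hom0E2 etaI2 [augD2 augK2 aug02]]]]].
split; [split|split; [split|split; [split|split]]].
- by move=> k k' /=; rewrite etaD1 etaD2.
- by move=> k k' /=; rewrite etaM1 etaM2.
- by rewrite /= eta11 eta12.
- by move=> n; split.
- by move=> n a b /= [? ?] [? ?]; split; [apply: homB1|apply: homB2].
- move=> [a1 a2]; have [N1 [f1 [homf1 ->]]] := dec1 a1; have [N2 [f2 [homf2 ->]]] := dec2 a2.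
  exists (N1 + N2)%N, (fun i => (if (i < N1)%N then f1 i else 0, if (i < N2)%N then f2 i else 0)).
  split; first by move=> i /=; split; case: ifP.
  by rewrite big_pair (sum_ord_widen _ (leq_addr N2 N1)) (sum_ord_widen _ (leq_addl N1 N2)).
- move=> N f homf; rewrite big_pair => -[E1 E2] i ltiN.
  have := uniq1 N (fun i => (f i).1) (fun i => (homf i).1) E1 i ltiN.
  have := uniq2 N (fun i => (f i).2) (fun i => (homf i).2) E2 i ltiN.
  by case: (f i) => /= ? ? -> ->.
- by move=> p q a b /= [? ?] [? ?]; split; [apply: homM1|apply: homM2].
- move=> [a1 a2] /=; split.
    by move=> [/hom0E1 [k1 ->] /hom0E2 [k2 ->]]; exists (k1, k2).
  by move=> [[k1 k2] [-> ->]]; split; [apply/hom0E1; exists k1|apply/hom0E2; exists k2].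
- by move=> [k1 k2] [k1' k2'] [/etaI1 -> /etaI2 ->].
- split=> [[a1 a2] [b1 b2]|[k1 k2]|n [a1 a2] n_gt0 [? ?]] /=.
  + by rewrite augD1 augD2.
  + by rewrite augK1 augK2.
  + by rewrite (aug01 n) ?(aug02 n).
Qed.

Lemma theta0 (K : pzRingType) (A : gring K) (C : gcoring K) theta :
  @is_theta K A C theta -> theta 0 = 0.
Proof. by case=> [[thetaD _ _] _]; exact: additive_map0. Qed.

Lemma theta_prodP (R S : pzRingType) (A : gring R) (C : gcoring R) theta1
    (B : gring S) (D : gcoring S) theta2 :
  @is_theta R A C theta1 -> @is_theta S B D theta2 -> is_theta (theta_prod theta1 theta2).
Proof.
move=> [[D1 L1 R1] [I1 H1 S1]] [[D2 L2 R2] [I2 H2 S2]].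
split; split.
- by move=> [c1 c2] [d1 d2]; rewrite /theta_prod /= D1 D2.
- by move=> [k1 k2] [c1 c2]; rewrite /theta_prod /= L1 L2.
- by move=> [k1 k2] [c1 c2]; rewrite /theta_prod /= R1 R2.
- by move=> [c1 c2] [d1 d2] [/I1 -> /I2 ->].
- by move=> [c1 c2]; split; [apply: H1|apply: H2].
- move=> [a b] [/S1 [c1 E1] /S2 [c2 E2]]; exists (c1, c2).
  by rewrite /theta_prod /= E1 E2.
Qed.

Lemma mu11_theta_prod (R S : pzRingType) (A : gring R) (C : gcoring R) theta1
    (B : gring S) (D : gcoring S) theta2 :
  almost_koszul A C theta1 -> almost_koszul B D theta2 ->
  forall c : bcar (ccomp (gcoring_sum C D) 2),
  \sum_(x <- cdelta (gcoring_sum C D) (erefl (1 + 1)%N) c)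
     theta_prod theta1 theta2 x.1 * theta_prod theta1 theta2 x.2 = 0.
Proof.
move=> [_ _ T1 Q1] [_ _ T2 Q2] [c1 c2] /=.
rewrite big_cat !big_map /theta_prod /= (theta0 T1) (theta0 T2) !big_pair /= Q1 Q2.
by rewrite !big1 => [|*|*]; rewrite ?mulr0 ?mul0r ?addr0.
Qed.

Lemma tsum_cat (M N G : zmodType) (f : M -> N -> G) s t :
  tsum f (s ++ t) = tsum f s + tsum f t.
Proof. exact: big_cat. Qed.

Definition tensor_sum (R S : Type) (M1 N1 : bimod R) (M2 N2 : bimod S)
    (s1 : seq (bcar M1 * bcar N1)) (s2 : seq (bcar M2 * bcar N2))
  : seq (bcar (bimod_sum M1 M2) * bcar (bimod_sum N1 N2)) :=
  [seq ((x.1, 0), (x.2, 0)) | x <- s1] ++ [seq ((0, x.1), (0, x.2)) | x <- s2].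

Section TensorSum.
Variables (R S : pzRingType) (M1 N1 : bimod R) (M2 N2 : bimod S).
Local Notation M := (bimod_sum M1 M2).
Local Notation N := (bimod_sum N1 N2).

Lemma tsum_tensor_sum (G : zmodType) (f : bcar M -> bcar N -> G)
    (s1 : seq (bcar M1 * bcar N1)) (s2 : seq (bcar M2 * bcar N2)) :
  tsum f (tensor_sum s1 s2)
  = tsum (fun m n => f (m, 0) (n, 0)) s1 + tsum (fun m n => f (0, m) (0, n)) s2.
Proof. by rewrite tsum_cat /tsum !big_map. Qed.

Hypotheses (HM1 : is_bimod M1) (HN1 : is_bimod N1) (HM2 : is_bimod M2) (HN2 : is_bimod N2).

Lemma tensor_eq_sum (s1 t1 : seq (bcar M1 * bcar N1)) (s2 t2 : seq (bcar M2 * bcar N2)) :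
  tensor_eq s1 t1 -> tensor_eq s2 t2 -> tensor_eq (tensor_sum s1 s2) (tensor_sum t1 t2).
Proof.
move=> E1 E2 G f Hf; rewrite !tsum_tensor_sum.
by rewrite (E1 _ _ (balanced_suml HM2 HN2 Hf)) (E2 _ _ (balanced_sumr HM1 HN1 Hf)).
Qed.

Lemma lact_tensor_sum k (s1 : seq (bcar M1 * bcar N1)) (s2 : seq (bcar M2 * bcar N2)) :
  [seq (blact k x.1, x.2) | x <- tensor_sum s1 s2]
  = tensor_sum [seq (blact k.1 x.1, x.2) | x <- s1] [seq (blact k.2 x.1, x.2) | x <- s2].
Proof. by rewrite /tensor_sum map_cat -!map_comp /comp /= blactr0 // blactr0. Qed.

Lemma ract_tensor_sum k (s1 : seq (bcar M1 * bcar N1)) (s2 : seq (bcar M2 * bcar N2)) :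
  [seq (x.1, bract x.2 k) | x <- tensor_sum s1 s2]
  = tensor_sum [seq (x.1, bract x.2 k.1) | x <- s1] [seq (x.1, bract x.2 k.2) | x <- s2].
Proof. by rewrite /tensor_sum map_cat -!map_comp /comp /= bract0r // bract0r. Qed.

End TensorSum.

Lemma tsum_cdelta0 (K : pzRingType) (C : gcoring K) : is_conn_graded_coring C ->
  forall n p q (H : (p + q)%N = n) (G : zmodType) g,
  balanced (@bract _ (ccomp C p)) (@blact _ (ccomp C q)) g ->
  tsum (G := G) g (cdelta C H 0) = 0.
Proof.
move=> [_ [[deltaD _ _ _] _]] n p q H G g Hg.
by apply: (additive_map0 (f := fun c => tsum g (cdelta C H c))) => c c';
  rewrite (deltaD _ _ _ _ _ _ _ _ Hg) tsum_cat.
Qed.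

Section CoringSum.
Variables (R S : pzRingType) (C : gcoring R) (D : gcoring S).
Hypotheses (HC : is_conn_graded_coring C) (HD : is_conn_graded_coring D).
Local Notation Q := (gcoring_sum C D).

Let bimodC n : is_bimod (ccomp C n). Proof. by case: HC. Qed.
Let bimodD n : is_bimod (ccomp D n). Proof. by case: HD. Qed.

Lemma cdelta_sumE n p q (H : (p + q)%N = n) c :
  cdelta Q H c = tensor_sum (cdelta C H c.1) (cdelta D H c.2).
Proof. by []. Qed.

Section Component.
Variables (n p q : nat) (H : (p + q)%N = n) (G : zmodType).
Variables (g : bcar (ccomp Q p) -> bcar (ccomp Q q) -> G).
Hypothesis Hg : balanced (@bract _ (ccomp Q p)) (@blact _ (ccomp Q q)) g.

Lemma tsum_cdelta_suml c :
  tsum g (cdelta Q H (c, 0)) = tsum (fun a b => g (a, 0) (b, 0)) (cdelta C H c).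
Proof.
rewrite cdelta_sumE tsum_tensor_sum (tsum_cdelta0 HD) ?addr0 //.
exact: balanced_sumr.
Qed.

Lemma tsum_cdelta_sumr d :
  tsum g (cdelta Q H (0, d)) = tsum (fun a b => g (0, a) (0, b)) (cdelta D H d).
Proof.
rewrite cdelta_sumE tsum_tensor_sum (tsum_cdelta0 HC) ?add0r //.
exact: balanced_suml.
Qed.

End Component.

Lemma gcoring_sum_coassoc p q r n (H : (p + q + r)%N = n) c :
  tensor3_eq
    (flatten [seq [seq (y.1, y.2, x.2) | y <- cdelta Q (erefl (p + q)%N) x.1]
             | x <- cdelta Q H c])
    (flatten [seq [seq (x.1, y.1, y.2) | y <- cdelta Q (erefl (q + r)%N) x.2]
             | x <- cdelta Q (etrans (addnA p q r) H) c]).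
Proof.
move=> G f Hf; have [_ [[_ _ _ coassC] _]] := HC; have [_ [[_ _ _ coassD] _]] := HD.
have := coassC p q r n H c.1 G _ (balanced3_suml (bimodD p) (bimodD q) (bimodD r) Hf).
have := coassD p q r n H c.2 G _ (balanced3_sumr (bimodC p) (bimodC q) (bimodC r) Hf).
rewrite !big_flatten_map /= => {coassC coassD} E2 E1.
have innerl12 m u : \sum_(y <- cdelta Q (erefl (p + q)%N) (m, 0)) f y.1 y.2 u
                   = \sum_(y <- cdelta C (erefl (p + q)%N) m) f (y.1, 0) (y.2, 0) u.
  exact: (@tsum_cdelta_suml _ _ _ (erefl _) _ _ (balanced3_fix3 Hf u)).
have innerr12 m u : \sum_(y <- cdelta Q (erefl (p + q)%N) (0, m)) f y.1 y.2 u
                   = \sum_(y <- cdelta D (erefl (p + q)%N) m) f (0, y.1) (0, y.2) u.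
  exact: (@tsum_cdelta_sumr _ _ _ (erefl _) _ _ (balanced3_fix3 Hf u)).
have innerl23 m u : \sum_(y <- cdelta Q (erefl (q + r)%N) (m, 0)) f u y.1 y.2
                   = \sum_(y <- cdelta C (erefl (q + r)%N) m) f u (y.1, 0) (y.2, 0).
  exact: (@tsum_cdelta_suml _ _ _ (erefl _) _ _ (balanced3_fix1 Hf u)).
have innerr23 m u : \sum_(y <- cdelta Q (erefl (q + r)%N) (0, m)) f u y.1 y.2
                   = \sum_(y <- cdelta D (erefl (q + r)%N) m) f u (0, y.1) (0, y.2).
  exact: (@tsum_cdelta_sumr _ _ _ (erefl _) _ _ (balanced3_fix1 Hf u)).
rewrite !big_cat !big_map /=.
under [X in X + _ = _]eq_bigr do rewrite innerl12.
under [X in _ + X = _]eq_bigr do rewrite innerr12.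
under [X in _ = X + _]eq_bigr do rewrite innerl23.
under [X in _ = _ + X]eq_bigr do rewrite innerr23.
by rewrite E1 E2.
Qed.

Lemma gcoring_sumP : is_conn_graded_coring Q.
Proof.
have [_ [[deltaDC deltaLC deltaRC _] [[epsDC epsLC epsRC epsBC] countLC countRC]]] := HC.
have [_ [[deltaDD deltaLD deltaRD _] [[epsDD epsLD epsRD epsBD] countLD countRD]]] := HD.
have bimodQ n : is_bimod (ccomp Q n) by apply: bimod_sumP.
split=> //; split; [split|split; [split|..]].
- move=> n p q H [c1 c2] [c1' c2'] G f Hf.
  rewrite !cdelta_sumE add_pairE tsum_cat !tsum_tensor_sum.
  rewrite (deltaDC _ _ _ _ _ _ _ _ (balanced_suml (bimodD p) (bimodD q) Hf)).
  by rewrite (deltaDD _ _ _ _ _ _ _ _ (balanced_sumr (bimodC p) (bimodC q) Hf)) !tsum_cat addrACA.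
- move=> n p q H k c; rewrite !cdelta_sumE lact_tensor_sum //.
  by apply: tensor_eq_sum => //; [apply: deltaLC|apply: deltaLD].
- move=> n p q H k c; rewrite !cdelta_sumE ract_tensor_sum //.
  by apply: tensor_eq_sum => //; [apply: deltaRC|apply: deltaRD].
- exact: gcoring_sum_coassoc.
- by move=> [c1 c2] [d1 d2]; rewrite /= epsDC epsDD.
- by move=> [k1 k2] [c1 c2] /=; rewrite epsLC epsLD.
- by move=> [k1 k2] [c1 c2] /=; rewrite epsRC epsRD.
- have [g1 g1K K1g] := epsBC; have [g2 g2K K2g] := epsBD.
  by exists (fun k => (g1 k.1, g2 k.2)) => [[c1 c2]|[k1 k2]] /=; rewrite ?g1K ?g2K ?K1g ?K2g.
- move=> n [c1 c2]; rewrite /= /tensor_sum big_cat !big_map !big_pair /=.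
  by rewrite blactr0 // blactr0 // !big1_eq countLC countLD add_pairE addr0 add0r.
- move=> n [c1 c2]; rewrite /= /tensor_sum big_cat !big_map !big_pair /=.
  by rewrite bract0r // bract0r // !big1_eq countRC countRD add_pairE addr0 add0r.
Qed.

End CoringSum.

Definition koszul_exact_aug (K : pzRingType) (A : gring K) (C : gcoring K) : Prop :=
  forall k : K, exists s : seq (gcar A * bcar (ccomp C 0)), kdiff0 s = k.

Definition koszul_exact0 (K : pzRingType) (A : gring K) (C : gcoring K)
    (theta : bcar (ccomp C 1) -> gcar A) : Prop :=
  forall s : seq (gcar A * bcar (ccomp C 0)), kdiff0 s = 0 ->
    exists t, tensor_eq (M := gring_bimod A) (kdiff theta t) s.

Definition koszul_exactS (K : pzRingType) (A : gring K) (C : gcoring K)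
    (theta : bcar (ccomp C 1) -> gcar A) : Prop :=
  forall n (s : seq (gcar A * bcar (ccomp C n.+1))),
    tensor_eq (M := gring_bimod A) (kdiff theta s) [::] ->
    exists t, tensor_eq (M := gring_bimod A) (kdiff theta t) s.

Arguments koszul_exact0 {K} A C theta.
Arguments koszul_exactS {K} A C theta.

Lemma kdiff_cat (K : Type) (A : gring K) (C : gcoring K) theta n
    (s t : seq (gcar A * bcar (ccomp C n.+1))) :
  kdiff theta (s ++ t) = kdiff theta s ++ kdiff theta t.
Proof. by rewrite /kdiff map_cat flatten_cat. Qed.

Lemma tsum_kdiff_zeros (K : Type) (A : gring K) (C : gcoring K) theta n (T : Type)
    (G : zmodType) (g : gcar A -> bcar (ccomp C n) -> G) (r : seq T) :
  (forall c, g 0 c = 0) -> tsum g (kdiff theta [seq (0, 0) | _ <- r]) = 0.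
Proof.
move=> g0; rewrite /kdiff /tsum big_flatten_map big_map big1 // => x _.
by rewrite big1 // => y _ /=; rewrite mul0r g0.
Qed.

Section KoszulSum.
Variables (R S : pzRingType).
Variables (A : gring R) (C : gcoring R) (theta1 : bcar (ccomp C 1) -> gcar A).
Variables (B : gring S) (D : gcoring S) (theta2 : bcar (ccomp D 1) -> gcar B).
Hypotheses (HA : almost_koszul A C theta1) (HB : almost_koszul B D theta2).

Local Notation P := (gring_prod A B).
Local Notation Q := (gcoring_sum C D).
Local Notation theta := (theta_prod theta1 theta2).

Let ringA : is_conn_graded_ring A. Proof. by case: HA. Qed.
Let ringB : is_conn_graded_ring B. Proof. by case: HB. Qed.
Let bimodA : is_bimod (gring_bimod A). Proof. exact: gring_bimodP. Qed.
Let bimodB : is_bimod (gring_bimod B). Proof. exact: gring_bimodP. Qed.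
Let bimodC n : is_bimod (ccomp C n). Proof. by case: HA => _ [? _] _ _. Qed.
Let bimodD n : is_bimod (ccomp D n). Proof. by case: HB => _ [? _] _ _. Qed.

Definition chain_fst n (s : seq (gcar P * bcar (ccomp Q n)))
  : seq (gcar A * bcar (ccomp C n)) := [seq (x.1.1, x.2.1) | x <- s].

Definition chain_snd n (s : seq (gcar P * bcar (ccomp Q n)))
  : seq (gcar B * bcar (ccomp D n)) := [seq (x.1.2, x.2.2) | x <- s].

Definition chain_pair n
    (s1 : seq (gcar A * bcar (ccomp C n))) (s2 : seq (gcar B * bcar (ccomp D n)))
  : seq (gcar P * bcar (ccomp Q n)) :=
  @tensor_sum _ _ (gring_bimod A) (ccomp C n) (gring_bimod B) (ccomp D n) s1 s2.

Lemma chain_fst_pair n (s1 : seq (gcar A * bcar (ccomp C n))) s2 :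
  chain_fst (chain_pair s1 s2) = s1 ++ [seq (0, 0) | _ <- s2].
Proof.
by rewrite /chain_fst /chain_pair /tensor_sum map_cat -!map_comp; congr (_ ++ _);
  apply: map_id_in => -[].
Qed.

Lemma chain_snd_pair n (s1 : seq (gcar A * bcar (ccomp C n))) s2 :
  chain_snd (chain_pair s1 s2) = [seq (0, 0) | _ <- s1] ++ s2.
Proof.
by rewrite /chain_snd /chain_pair /tensor_sum map_cat -!map_comp; congr (_ ++ _);
  apply: map_id_in => -[].
Qed.

Lemma kdiff0_chain_pair (s1 : seq (gcar A * bcar (ccomp C 0))) s2 :
  kdiff0 (chain_pair s1 s2) = (kdiff0 s1, kdiff0 s2).
Proof.
rewrite /kdiff0 /chain_pair /tensor_sum big_cat !big_map !big_pair /= !mul0r !gaug0 //.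
by rewrite !big1_eq add_pairE addr0 add0r.
Qed.

Lemma kdiff0_chain_split (s : seq (gcar P * bcar (ccomp Q 0))) :
  kdiff0 s = (kdiff0 (chain_fst s), kdiff0 (chain_snd s)).
Proof. by rewrite /kdiff0 big_pair /chain_fst /chain_snd !big_map. Qed.

Section ProductTensors.
Variables (n : nat) (G : zmodType) (f : gcar P -> bcar (ccomp Q n) -> G).

Lemma tsum_kdiff (s : seq (gcar P * bcar (ccomp Q n.+1))) :
  tsum f (kdiff theta s) = tsum (fun a c => f (a, 0) (c, 0)) (kdiff theta1 (chain_fst s))
                         + tsum (fun b d => f (0, b) (0, d)) (kdiff theta2 (chain_snd s)).
Proof.
have [_ _ T1 _] := HA; have [_ _ T2 _] := HB.
rewrite /kdiff /tsum !big_flatten_map /chain_fst /chain_snd !big_map -big_split.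
apply: eq_bigr => -[[a b] c] _; rewrite cdelta_sumE /tensor_sum big_cat !big_map /=.
rewrite /theta_prod /= (theta0 T1) (theta0 T2).
by under eq_bigr do rewrite mul_pairE mulr0; under [X in _ + X]eq_bigr do rewrite mul_pairE mulr0.
Qed.

Lemma tsum_chain_fst (g : gcar A -> bcar (ccomp C n) -> G) s :
  tsum (fun x y => g x.1 y.1) s = tsum g (chain_fst s).
Proof. by rewrite /tsum big_map. Qed.

Lemma tsum_chain_snd (g : gcar B -> bcar (ccomp D n) -> G) s :
  tsum (fun x y => g x.2 y.2) s = tsum g (chain_snd s).
Proof. by rewrite /tsum big_map. Qed.

Hypothesis Hf : balanced (@bract _ (gring_bimod P)) (@blact _ (ccomp Q n)) f.

Lemma balanced_chain_fst :
  balanced (@bract _ (gring_bimod A)) (@blact _ (ccomp C n)) (fun a c => f (a, 0) (c, 0)).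
Proof. exact: (@balanced_suml _ _ (gring_bimod A) (ccomp C n) (gring_bimod B) (ccomp D n)). Qed.

Lemma balanced_chain_snd :
  balanced (@bract _ (gring_bimod B)) (@blact _ (ccomp D n)) (fun b d => f (0, b) (0, d)).
Proof. exact: (@balanced_sumr _ _ (gring_bimod A) (ccomp C n) (gring_bimod B) (ccomp D n)). Qed.

Lemma tsum_chain_fst_chain_snd s :
  tsum f s = tsum (fun a c => f (a, 0) (c, 0)) (chain_fst s)
            + tsum (fun b d => f (0, b) (0, d)) (chain_snd s).
Proof.
rewrite /tsum /chain_fst /chain_snd !big_map -big_split; apply: eq_bigr => x _.
exact: (@balanced_sum_split _ _ (gring_bimod A) (ccomp C n) (gring_bimod B) (ccomp D n)).
Qed.

End ProductTensors.

Lemma balanced_fst_prod n (G : zmodType) (g : gcar A -> bcar (ccomp C n) -> G) :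
  balanced (@bract _ (gring_bimod A)) (@blact _ (ccomp C n)) g ->
  balanced (@bract _ (gring_bimod P)) (@blact _ (ccomp Q n)) (fun x y => g x.1 y.1).
Proof. exact: (@balanced_fst _ _ (gring_bimod A) (ccomp C n) (gring_bimod B) (ccomp D n)). Qed.

Lemma balanced_snd_prod n (G : zmodType) (g : gcar B -> bcar (ccomp D n) -> G) :
  balanced (@bract _ (gring_bimod B)) (@blact _ (ccomp D n)) g ->
  balanced (@bract _ (gring_bimod P)) (@blact _ (ccomp Q n)) (fun x y => g x.2 y.2).
Proof. exact: (@balanced_snd _ _ (gring_bimod A) (ccomp C n) (gring_bimod B) (ccomp D n)). Qed.

Lemma tensor_eq_kdiff_chain_pair n (s : seq (gcar P * bcar (ccomp Q n))) t1 t2 :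
  tensor_eq (M := gring_bimod A) (kdiff theta1 t1) (chain_fst s) ->
  tensor_eq (M := gring_bimod B) (kdiff theta2 t2) (chain_snd s) ->
  tensor_eq (M := gring_bimod P) (kdiff theta (chain_pair t1 t2)) s.
Proof.
move=> E1 E2 G f Hf; have f0l := balanced0l Hf.
rewrite tsum_kdiff (tsum_chain_fst_chain_snd Hf) chain_fst_pair chain_snd_pair !kdiff_cat !tsum_cat.
rewrite !tsum_kdiff_zeros ?addr0 ?add0r //.
by rewrite (E1 _ _ (balanced_chain_fst Hf)) (E2 _ _ (balanced_chain_snd Hf)).
Qed.

Lemma tensor_eq_kdiff_chain_fst n (s : seq (gcar P * bcar (ccomp Q n)))
    (t : seq (gcar P * bcar (ccomp Q n.+1))) :
  tensor_eq (M := gring_bimod P) (kdiff theta t) s ->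
  tensor_eq (M := gring_bimod A) (kdiff theta1 (chain_fst t)) (chain_fst s).
Proof.
move=> E G g Hg; have := E G _ (balanced_fst_prod Hg).
by rewrite tsum_kdiff tsum_chain_fst /tsum /= (balanced0l Hg) big1_eq addr0.
Qed.

Lemma tensor_eq_kdiff_chain_snd n (s : seq (gcar P * bcar (ccomp Q n)))
    (t : seq (gcar P * bcar (ccomp Q n.+1))) :
  tensor_eq (M := gring_bimod P) (kdiff theta t) s ->
  tensor_eq (M := gring_bimod B) (kdiff theta2 (chain_snd t)) (chain_snd s).
Proof.
move=> E G g Hg; have := E G _ (balanced_snd_prod Hg).
by rewrite tsum_kdiff tsum_chain_snd /tsum /= (balanced0l Hg) big1_eq add0r.
Qed.

Lemma koszul_exact_aug_sum :
  koszul_exact_aug P Q <-> koszul_exact_aug A C /\ koszul_exact_aug B D.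
Proof.
split=> [onto|[ontoA ontoB] [r s]].
  split=> k.
    have [s E] := onto (k, 0); exists (chain_fst s).
    by move: E; rewrite kdiff0_chain_split => /(congr1 fst).
  have [s E] := onto (0, k); exists (chain_snd s).
  by move: E; rewrite kdiff0_chain_split => /(congr1 snd).
have [s1 <-] := ontoA r; have [s2 <-] := ontoB s.
by exists (chain_pair s1 s2); exact: kdiff0_chain_pair.
Qed.

Lemma koszul_exact0_sum :
  koszul_exact0 P Q theta <-> koszul_exact0 A C theta1 /\ koszul_exact0 B D theta2.
Proof.
split=> [exact0|[exactA exactB] s].
  split=> s E.
    have [|t Et] := exact0 (chain_pair s [::]).
      by rewrite kdiff0_chain_pair E /kdiff0 big_nil.
    by exists (chain_fst t); move: (tensor_eq_kdiff_chain_fst Et); rewrite chain_fst_pair /= cats0.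
  have [|t Et] := exact0 (chain_pair [::] s).
    by rewrite kdiff0_chain_pair E /kdiff0 big_nil.
  by exists (chain_snd t); move: (tensor_eq_kdiff_chain_snd Et); rewrite chain_snd_pair.
rewrite kdiff0_chain_split => E.
have [t1 E1] := exactA _ (congr1 fst E); have [t2 E2] := exactB _ (congr1 snd E).
by exists (chain_pair t1 t2); exact: tensor_eq_kdiff_chain_pair.
Qed.

Lemma koszul_exactS_sum :
  koszul_exactS P Q theta <-> koszul_exactS A C theta1 /\ koszul_exactS B D theta2.
Proof.
split=> [exactS|[exactA exactB] n s E].
  split=> n s E.
    have [|t Et] := exactS n (chain_pair s [::]); first exact: tensor_eq_kdiff_chain_pair.
    by exists (chain_fst t); move: (tensor_eq_kdiff_chain_fst Et); rewrite chain_fst_pair /= cats0.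
  have [|t Et] := exactS n (chain_pair [::] s); first exact: tensor_eq_kdiff_chain_pair.
  by exists (chain_snd t); move: (tensor_eq_kdiff_chain_snd Et); rewrite chain_snd_pair.
have [t1 E1] := exactA n _ (tensor_eq_kdiff_chain_fst E).
have [t2 E2] := exactB n _ (tensor_eq_kdiff_chain_snd E).
by exists (chain_pair t1 t2); exact: tensor_eq_kdiff_chain_pair.
Qed.

End KoszulSum.

Theorem proposition4p11 (R S : pzRingType) (HR : semisimple R) (HS : semisimple S)
  (A : gring R) (C : gcoring R) (theta1 : bcar (ccomp C 1) -> gcar A)
  (B : gring S) (D : gcoring S) (theta2 : bcar (ccomp D 1) -> gcar B) :
  almost_koszul A C theta1 -> almost_koszul B D theta2 ->
  almost_koszul (gring_prod A B) (gcoring_sum C D) (theta_prod theta1 theta2) /\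
  (koszul (gring_prod A B) (gcoring_sum C D) (theta_prod theta1 theta2) <->
   koszul A C theta1 /\ koszul B D theta2).
Proof.
move=> HA HB; have [ringA coringC thetaA _] := HA; have [ringB coringD thetaB _] := HB.
have HP : almost_koszul (gring_prod A B) (gcoring_sum C D) (theta_prod theta1 theta2).
  split; [exact: gring_prodP|exact: gcoring_sumP|exact: theta_prodP|exact: mu11_theta_prod].
split=> //; split=> [[_ [augP exact0P exactSP]]|].
  move: augP exact0P exactSP => /(koszul_exact_aug_sum HA HB) [augA augB].
  move=> /(koszul_exact0_sum HA HB) [exact0A exact0B] /(koszul_exactS_sum HA HB) [exactSA exactSB].
  by split; split.
move=> [[_ [augA exact0A exactSA]] [_ [augB exact0B exactSB]]]; split=> //; split.
- exact/(koszul_exact_aug_sum HA HB).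
- exact/(koszul_exact0_sum HA HB).
- exact/(koszul_exactS_sum HA HB).
Qed.
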